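(* Let $n\geq 2$ and consider the clustered graph of overlapping $n$-permutations. For every cluster $Y$ there exists a unique cluster $X$ such that there are exactly two (parallel) edges from $X$ to $Y$.
   Context: An $n$-permutation is a permutation $\pi_1\cdots\pi_n$ of $\{1,\ldots,n\}$. For a word $w$ of distinct numbers, $\mathrm{red}(w)$ is the permutation obtained by replacing the $i$-th smallest letter by $i$. For an $(n-1)$-permutation $\tau$, the cluster with signature $\tau$ is the set of all $n$-permutations $\pi$ with $\mathrm{red}(\pi_1\cdots\pi_{n-1})=\tau$. The clustered graph of overlapping $n$-permutations is the directed multigraph (loops allowed) whose vertices are the $(n-1)!$ clusters and in which every $n$-permutation $\pi$ contributes exactly one edge, going from the cluster containing $\pi$ to the cluster with signature $\mathrm{red}(\pi_2\cdots\pi_n)$. *)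

From mathcomp Require Import all_boot all_fingroup.
Set Implicit Arguments. Unset Strict Implicit. Unset Printing Implicit Defensive.

(* Permutations of {0,...,k-1} (0-based instead of 1-based; harmless). *)
Definition word (k : nat) (s : 'S_k) : seq nat := [seq val (s i) | i <- enum 'I_k].

(* red w: replace the i-th smallest letter by i (0-based), for a word of
   distinct numbers: each letter is replaced by the number of letters smaller than it. *)
Definition red (w : seq nat) : seq nat := [seq count (fun y => y < x) w | x <- w].

(* Signature of the cluster containing pi: red(pi_1 ... pi_{n-1}). *)
Definition src (n : nat) (pi : 'S_n) : seq nat := red (take n.-1 (word pi)).
(* Signature of the cluster the edge of pi points to: red(pi_2 ... pi_n). *)
Definition tgt (n : nat) (pi : 'S_n) : seq nat := red (behead (word pi)).

(* Number of edges from cluster X to cluster Y (clusters indexed by their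
   signatures, (n-1)-permutations) in the clustered graph of overlapping n-permutations. *)
Definition nedges (n : nat) (X Y : 'S_n.-1) : nat :=
  #|[set pi : 'S_n | (src pi == word X) && (tgt pi == word Y)]|.

From mathcomp Require Import all_boot all_fingroup.
From mathcomp Require Import zify.

Set Implicit Arguments.
Unset Strict Implicit.
Unset Printing Implicit Defensive.

(** An n-permutation is determined by its source cluster, its target cluster
    and the relative order of its first and last letters, since every other
    pair of positions lies in one of the two windows; hence there are at most
    two parallel edges, and there are two exactly when the first and last
    letters can be exchanged, i.e. when they are consecutive values.  If Y ends
    with the letter c, then c followed by Y with every letter >= c raised by
    one ends with c+1, so its source cluster has two edges to Y.  Conversely,
    when the end letters are consecutive, the first letter compares with every
    middle letter as the last one does, so the source pattern is read off the
    target pattern and that cluster is unique. *)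

Definition order_iso_on (m : nat) (f g : nat -> nat) :=
  forall i j, i < m -> j < m -> (f i < f j) = (g i < g j).

Lemma order_iso_on_ltn (m : nat) (f g : nat -> nat) :
  (forall i j, i < m -> j < m -> f i = f j -> i = j) ->
  (forall i j, i < m -> j < m -> g i = g j -> i = j) ->
  (forall i j, i < j -> j < m -> (f i < f j) = (g i < g j)) ->
  order_iso_on m f g.
Proof.
move=> inj_f inj_g iso i j lt_im lt_jm.
case: (ltngtP i j) => [lt_ij | lt_ji | ->]; [exact: iso | | by rewrite !ltnn].
have ne_f : f i != f j by apply/eqP => /inj_f eq_ij; rewrite eq_ij ?ltnn in lt_ji.
have ne_g : g i != g j by apply/eqP => /inj_g eq_ij; rewrite eq_ij ?ltnn in lt_ji.
have flip (x y : nat) : x != y -> (x < y) = ~~ (y < x).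
  by rewrite ltnNge leq_eqVlt eq_sym => /negbTE ->.
by rewrite flip // [g i < _]flip // iso.
Qed.

Section Reduction.

Implicit Types w a b : seq nat.

Lemma size_red w : size (red w) = size w.
Proof. exact: size_map. Qed.

Lemma leq_count_ltn (x y : nat) w :
  x <= y -> count (fun z => z < x) w <= count (fun z => z < y) w.
Proof. by move=> le_xy; apply: sub_count => z /= /leq_trans; apply. Qed.

Lemma ltn_count_ltn (x y : nat) w :
  x < y -> x \in w -> count (fun z => z < x) w < count (fun z => z < y) w.
Proof.
move=> lt_xy; elim: w => [|z w IHw] //=; rewrite in_cons => /predU1P [<-|xw].
  by rewrite ltnn lt_xy add1n ltnS leq_count_ltn // ltnW.
rewrite -addnS leq_add ?IHw //.
by case: (ltnP z x) => // lt_zx; rewrite (ltn_trans lt_zx lt_xy).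
Qed.

Lemma nth_red_ltn w i j : i < size w -> j < size w ->
  (nth 0 (red w) i < nth 0 (red w) j) = (nth 0 w i < nth 0 w j).
Proof.
move=> lt_iw lt_jw; rewrite /red !(nth_map 0) //.
case: (ltnP (nth 0 w i) (nth 0 w j)) => [lt_wij | le_wji].
  by rewrite ltn_count_ltn ?mem_nth.
by apply/negbTE; rewrite -leqNgt leq_count_ltn.
Qed.

Lemma red_eqP a b :
  red a = red b <-> size a = size b /\ order_iso_on (size a) (nth 0 a) (nth 0 b).
Proof.
split=> [eq_ab | [eq_size iso_ab]].
  have eq_size : size a = size b by rewrite -(size_red a) eq_ab size_red.
  split=> // i j lt_ia lt_ja.
  by rewrite -nth_red_ltn // eq_ab nth_red_ltn -?eq_size.
apply: (@eq_from_nth _ 0); rewrite !size_red // => i lt_ia.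
have count_nth (p : pred nat) c :
    count p c = count (fun j => p (nth 0 c j)) (iota 0 (size c)).
  by rewrite -{1}(mkseq_nth 0 c) count_map.
rewrite /red !(nth_map 0) -?eq_size // (count_nth _ a) (count_nth _ b) -eq_size.
by apply: eq_in_count => j; rewrite mem_iota => lt_ja; apply: iso_ab.
Qed.

Lemma red_map_mono (f : nat -> nat) w :
  {mono f : x y / x < y} -> red (map f w) = red w.
Proof.
move=> mono_f; apply/red_eqP; rewrite size_map; split=> // i j lt_i lt_j.
by rewrite !(nth_map 0) // mono_f.
Qed.

Lemma uniq_red w : uniq w -> uniq (red w).
Proof.
move=> uniq_w; apply/(uniqP 0) => i j; rewrite !inE size_red => lt_i lt_j eq_ij.
apply/eqP; rewrite -(nth_uniq 0 lt_i lt_j uniq_w).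
by case: ltngtP => // lt_w; move: lt_w; rewrite -nth_red_ltn // eq_ij ltnn.
Qed.

Lemma red_ltn_size w : all (fun x => x < size w) (red w).
Proof.
apply/allP => _ /mapP [x xw ->].
rewrite -[size w](count_predC (fun z => z < x)) -[X in X < _]addn0 ltn_add2l.
by rewrite -has_count; apply/hasP; exists x => //=; rewrite ltnn.
Qed.

End Reduction.

Local Notation letter s := (nth 0 (word s)).

Section Words.

Variable k : nat.
Implicit Types s t : 'S_k.

Lemma size_word s : size (word s) = k.
Proof. by rewrite size_map size_enum_ord. Qed.

Lemma nth_word s (i : 'I_k) : letter s i = s i.
Proof. by rewrite (nth_map i) ?size_enum_ord // nth_ord_enum. Qed.

Lemma uniq_word s : uniq (word s).
Proof.
rewrite (map_inj_uniq (f := fun i => val (s i))) ?enum_uniq //.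
by move=> i j /val_inj /perm_inj.
Qed.

Lemma letter_ltn s i : i < k -> letter s i < k.
Proof. by move=> lt_ik; rewrite -[i]/(val (Ordinal lt_ik)) nth_word. Qed.

Lemma letter_inj s i j : i < k -> j < k -> letter s i = letter s j -> i = j.
Proof.
move=> lt_ik lt_jk eq_ij; apply/eqP.
by rewrite -(nth_uniq 0 _ _ (uniq_word s)) ?size_word ?eq_ij.
Qed.

Lemma letter_surj s v : v < k -> exists2 i, i < k & letter s i = v.
Proof. by move=> lt_vk; exists (s^-1 (Ordinal lt_vk))%g; rewrite ?nth_word ?permKV. Qed.

Lemma letter_mul s t (i : 'I_k) : letter (s * t)%g i = t (s i).
Proof. by rewrite nth_word permM. Qed.

Lemma word_inj : injective (@word k).
Proof.
move=> s t eq_st; apply/permP => i; apply: val_inj.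
by rewrite /= -!nth_word eq_st.
Qed.

Lemma perm_iota_word s : perm_eq (word s) (iota 0 k).
Proof.
apply: uniq_perm; rewrite ?uniq_word ?iota_uniq // => x.
rewrite mem_iota add0n leq0n /=; apply/mapP/idP => [[i _ ->] | lt_xk].
  exact: ltn_ord.
by exists (s^-1 (Ordinal lt_xk))%g; rewrite ?mem_enum ?permKV.
Qed.

Lemma red_word s : red (word s) = word s.
Proof.
apply: (@eq_from_nth _ 0); rewrite size_red // => i lt_is.
rewrite size_word in lt_is.
rewrite /red (nth_map 0) ?size_word // (seq.permP (perm_iota_word s)) -size_filter.
by rewrite (@filter_iota_ltn 0 k (letter s i)) ?size_iota // ltnW ?letter_ltn.
Qed.

Lemma eq_perm_of_order_iso s t : order_iso_on k (letter s) (letter t) -> s = t.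
Proof.
move=> iso_st; apply: word_inj; rewrite -(red_word s) -(red_word t).
by apply/red_eqP; rewrite !size_word.
Qed.

End Words.

Lemma exists_word (r : seq nat) (k : nat) :
  size r = k -> uniq r -> all (fun x => x < k) r -> exists X : 'S_k, word X = r.
Proof.
move=> <- {k} uniq_r /allP lt_r.
have lt_nth (i : 'I_(size r)) : nth 0 r i < size r by apply/lt_r/mem_nth.
pose f (i : 'I_(size r)) : 'I_(size r) := Ordinal (lt_nth i).
have inj_f : injective f.
  move=> i j /(congr1 val) /= eq_ij; apply/val_inj/eqP.
  by rewrite -(nth_uniq 0 (ltn_ord i) (ltn_ord j) uniq_r) eq_ij.
exists (perm inj_f); apply: (@eq_from_nth _ 0); rewrite size_word // => i lt_ir.
by rewrite -[i]/(val (Ordinal lt_ir)) nth_word permE.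
Qed.

Lemma exists_red_word (w : seq nat) (k : nat) :
  size w = k -> uniq w -> exists X : 'S_k, word X = red w.
Proof.
move=> size_w uniq_w; apply: exists_word; rewrite ?size_red ?uniq_red //.
by rewrite -size_w red_ltn_size.
Qed.

Lemma exists_src_word (m : nat) (pi : 'S_m) : exists X : 'S_m.-1, src pi = word X.
Proof.
have size_w : size (take m.-1 (word pi)) = m.-1.
  by rewrite size_takel // size_word leq_pred.
have [X eq_X] := exists_red_word size_w (take_uniq _ (uniq_word pi)).
by exists X.
Qed.

Definition parallel_edges (m : nat) (pi : 'S_m) : {set 'S_m} :=
  [set t | (src t == src pi) && (tgt t == tgt pi)].

Lemma nedges_parallel (m : nat) (X Y : 'S_m.-1) (pi : 'S_m) :
  src pi = word X -> tgt pi = word Y -> nedges X Y = #|parallel_edges pi|.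
Proof. by move=> src_pi tgt_pi; rewrite /nedges /parallel_edges src_pi tgt_pi. Qed.

Section Windows.

Variable n : nat.
Implicit Types s t : 'S_n.+2.

Lemma src_eqP s t : src s = src t <-> order_iso_on n.+1 (letter s) (letter t).
Proof.
rewrite /src red_eqP !size_takel ?size_word //; split=> [[_ iso_st] | iso_st].
  by move=> i j lt_i lt_j; move: (iso_st i j lt_i lt_j); rewrite !nth_take.
by split=> // i j lt_i lt_j; rewrite !nth_take //; apply: iso_st.
Qed.

Lemma tgt_eqP s t :
  tgt s = tgt t <-> order_iso_on n.+1 (fun i => letter s i.+1) (fun i => letter t i.+1).
Proof.
rewrite /tgt red_eqP !size_behead !size_word; split=> [[_ iso_st] | iso_st].
  by move=> i j lt_i lt_j; move: (iso_st i j lt_i lt_j); rewrite !nth_behead.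
by split=> // i j lt_i lt_j; rewrite !nth_behead; apply: iso_st.
Qed.

Lemma letter_inj_init s i j : i < n.+1 -> j < n.+1 -> letter s i = letter s j -> i = j.
Proof. by move=> /ltnW lt_i /ltnW lt_j; apply: letter_inj. Qed.

Lemma letter_inj_tail s i j :
  i < n.+1 -> j < n.+1 -> letter s i.+1 = letter s j.+1 -> i = j.
Proof. by move=> lt_i lt_j /letter_inj-/(_ lt_i lt_j) []. Qed.

End Windows.

Lemma ltn_skip_succ (a v : nat) : v != a -> v != a.+1 ->
  ((a < v) = (a.+1 < v)) * ((v < a) = (v < a.+1)).
Proof. by move=> /eqP ne_va /eqP ne_vSa; split; apply/idP/idP; lia. Qed.

Lemma ltn_bump2 (h : nat) : {mono bump h : i j / i < j}.
Proof. by move=> i j; rewrite !ltnNge leq_bump2. Qed.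

Section Ends.

Variable n : nat.
Implicit Types s t : 'S_n.+2.

Definition adjacent_ends s := letter s n.+1 = (letter s 0).+1.

Lemma adjacent_ends_ltn_mid s j : adjacent_ends s -> 0 < j -> j < n.+1 ->
  ((letter s 0 < letter s j) = (letter s n.+1 < letter s j)) *
  ((letter s j < letter s 0) = (letter s j < letter s n.+1)).
Proof.
move=> adj_s lt0j ltjn; have ltj : j < n.+2 by exact: ltnW.
rewrite adj_s; apply: ltn_skip_succ; rewrite -?adj_s; apply/eqP.
  by move=> /(letter_inj ltj (ltn0Sn _)) eq_j0; rewrite eq_j0 in lt0j.
by move=> /(letter_inj ltj (ltnSn _)) eq_jn; rewrite eq_jn ltnn in ltjn.
Qed.

Lemma eq_of_src_tgt_ends s t : src s = src t -> tgt s = tgt t ->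
  (letter s 0 < letter s n.+1) = (letter t 0 < letter t n.+1) -> s = t.
Proof.
move=> /src_eqP iso_src /tgt_eqP iso_tgt ends_st.
apply/eq_perm_of_order_iso/order_iso_on_ltn; try exact: letter_inj.
move=> [|i] j lt_ij lt_j.
  case: (ltnP j n.+1) => [lt_jn | le_nj]; first exact: iso_src.
  by have -> : j = n.+1 by lia.
case: j lt_ij lt_j => // j lt_ij lt_j.
by apply: iso_tgt; lia.
Qed.

Lemma adjacent_ends_of_opposite s t : src s = src t -> tgt s = tgt t ->
  letter s 0 < letter s n.+1 -> ~~ (letter t 0 < letter t n.+1) -> adjacent_ends s.
Proof.
move=> /src_eqP iso_src /tgt_eqP iso_tgt lt_s not_lt_t.
apply/eqP; rewrite eqn_leq lt_s andbT leqNgt; apply/negP => gap.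
have lt_v : (letter s 0).+1 < n.+2 by exact: ltn_trans gap (letter_ltn s (ltnSn _)).
(* The value after [letter s 0] sits at a middle position k, and the two
   windows carry [letter s 0 < letter s k < letter s n.+1] over to t. *)
have [[|k] lt_k sk] := letter_surj s lt_v; first by lia.
have ne_kn : k != n by apply: contraTneq gap => eq_kn; rewrite -sk eq_kn ltnn.
have lt_kn : k < n by lia.
have lt_t0k : letter t 0 < letter t k.+1 by rewrite -iso_src ?sk //; lia.
have lt_tkn : letter t k.+1 < letter t n.+1 by rewrite -(iso_tgt k n) ?sk //; lia.
by rewrite (ltn_trans lt_t0k lt_tkn) in not_lt_t.
Qed.

Lemma src_eq_of_adjacent_ends s t : tgt s = tgt t ->
  adjacent_ends s -> adjacent_ends t -> src s = src t.
Proof.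
move=> /tgt_eqP iso_tgt adj_s adj_t.
apply/src_eqP/order_iso_on_ltn; try exact: letter_inj_init.
move=> [|i] [|j] // lt_ij lt_j.
  by rewrite !adjacent_ends_ltn_mid //; apply: iso_tgt; lia.
by apply: iso_tgt; lia.
Qed.

Definition swap_ends s : 'S_n.+2 := (s * tperm (s ord0) (s ord_max))%g.

Lemma letter_swap_ends0 s : letter (swap_ends s) 0 = letter s n.+1.
Proof. by rewrite /swap_ends (letter_mul _ _ ord0) tpermL (nth_word s ord_max). Qed.

Lemma letter_swap_endsN s : letter (swap_ends s) n.+1 = letter s 0.
Proof. by rewrite /swap_ends (letter_mul _ _ ord_max) tpermR (nth_word s ord0). Qed.

Lemma letter_swap_ends_mid s j : 0 < j -> j < n.+1 ->
  letter (swap_ends s) j = letter s j.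
Proof.
move=> lt0j ltjn; have ltj : j < n.+2 by exact: ltnW.
rewrite /swap_ends (letter_mul _ _ (Ordinal ltj)) (nth_word s (Ordinal ltj)) tpermD //.
  by rewrite (inj_eq perm_inj) -val_eqE /= eq_sym -lt0n.
by rewrite (inj_eq perm_inj) -val_eqE /= neq_ltn ltjn orbT.
Qed.

Lemma src_swap_ends s : adjacent_ends s -> src (swap_ends s) = src s.
Proof.
move=> adj_s; apply/src_eqP/order_iso_on_ltn; try exact: letter_inj_init.
move=> [|i] j lt_ij lt_j.
  by rewrite letter_swap_ends0 letter_swap_ends_mid ?adjacent_ends_ltn_mid.
by rewrite !letter_swap_ends_mid //; lia.
Qed.

Lemma tgt_swap_ends s : adjacent_ends s -> tgt (swap_ends s) = tgt s.
Proof.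
move=> adj_s; apply/tgt_eqP/order_iso_on_ltn; try exact: letter_inj_tail.
move=> i j lt_ij lt_j; case: (ltnP j n) => [lt_jn | le_nj].
  by rewrite !letter_swap_ends_mid //; lia.
have -> : j = n by lia.
by rewrite letter_swap_endsN letter_swap_ends_mid ?adjacent_ends_ltn_mid //; lia.
Qed.

Lemma exists_adjacent_ends_tgt (Y : 'S_n.+1) :
  exists2 s : 'S_n.+2, tgt s = word Y & adjacent_ends s.
Proof.
pose c := val (Y ord_max).
have lt_c : c < n.+2 := leqW (ltn_ord (Y ord_max)).
pose s := lift_perm ord0 (Ordinal lt_c) Y.
have behead_s : behead (word s) = map (bump c) (word Y).
  rewrite /word enum_ordSl /= -!map_comp; apply: eq_map => i /=.
  by rewrite /s lift_perm_lift.
exists s; first by rewrite /tgt behead_s red_map_mono ?red_word //; exact: ltn_bump2.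
rewrite /adjacent_ends -(nth_behead 0 (word s) n) behead_s (nth_map 0) ?size_word //.
by rewrite (nth_word Y ord_max) (nth_word s ord0) /s lift_perm_id /bump leqnn.
Qed.

End Ends.

Section ParallelEdges.

Variable n : nat.
Implicit Types s t : 'S_n.+2.

Lemma parallel_edges_adjacent s :
  adjacent_ends s -> parallel_edges s = [set s; swap_ends s].
Proof.
move=> adj_s; apply/setP => t; rewrite !inE; apply/idP/idP; last first.
  by case/orP => /eqP ->; rewrite ?src_swap_ends ?tgt_swap_ends ?eqxx.
case/andP => /eqP src_t /eqP tgt_t.
case: (boolP (letter t 0 < letter t n.+1)) => ends_t.
  by rewrite (eq_of_src_tgt_ends src_t tgt_t) ?eqxx // ends_t adj_s ltnSn.
rewrite (@eq_of_src_tgt_ends _ t (swap_ends s)) ?eqxx ?orbT //.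
- by rewrite src_swap_ends.
- by rewrite tgt_swap_ends.
by rewrite letter_swap_ends0 letter_swap_endsN adj_s (negbTE ends_t) ltnNge leqnSn.
Qed.

Lemma card_parallel_edges_adjacent s : adjacent_ends s -> #|parallel_edges s| = 2.
Proof.
move=> adj_s; rewrite parallel_edges_adjacent // cards2.
suff -> : s != swap_ends s by [].
apply/eqP => eq_s; have := letter_swap_ends0 s.
by rewrite -eq_s adj_s; lia.
Qed.

Lemma adjacent_in_parallel_edges s : #|parallel_edges s| = 2 ->
  exists2 t, t \in parallel_edges s & adjacent_ends t.
Proof.
move=> /eqP /cards2P [u [v [neq_uv par_s]]].
have /[!inE] /andP [/eqP src_u /eqP tgt_u] : u \in parallel_edges s.
  by rewrite par_s set21.
have /[!inE] /andP [/eqP src_v /eqP tgt_v] : v \in parallel_edges s.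
  by rewrite par_s set22.
have src_uv : src u = src v by rewrite src_u src_v.
have tgt_uv : tgt u = tgt v by rewrite tgt_u tgt_v.
have opp : (letter u 0 < letter u n.+1) != (letter v 0 < letter v n.+1).
  by apply: contra neq_uv => /eqP ends_uv; apply/eqP/eq_of_src_tgt_ends.
case: (boolP (letter u 0 < letter u n.+1)) => ends_u.
  exists u; first by rewrite par_s set21.
  have ends_v : ~~ (letter v 0 < letter v n.+1).
    by move: opp; rewrite ends_u eq_sym eqb_id.
  exact: adjacent_ends_of_opposite src_uv tgt_uv ends_u ends_v.
exists v; first by rewrite par_s set22.
have ends_v : letter v 0 < letter v n.+1.
  by move: opp; rewrite (negbTE ends_u) eq_sym eqbF_neg negbK.
exact: adjacent_ends_of_opposite (esym src_uv) (esym tgt_uv) ends_v ends_u.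
Qed.

End ParallelEdges.

Theorem lemma3 (n : nat) (hn : 2 <= n) (Y : 'S_n.-1) :
  exists! X : 'S_n.-1, nedges X Y = 2.
Proof.
case: n hn Y => [|[|n]] // _ Y.
have [s tgt_s adj_s] := exists_adjacent_ends_tgt Y.
have [X src_s] := exists_src_word s.
exists X; split.
  by rewrite (nedges_parallel src_s tgt_s) card_parallel_edges_adjacent.
move=> X' two_edges; have /card_gt0P [u] : 0 < nedges X' Y by rewrite two_edges.
rewrite inE => /andP [/eqP src_u /eqP tgt_u].
rewrite (nedges_parallel src_u tgt_u) in two_edges.
have [t] := adjacent_in_parallel_edges two_edges.
rewrite inE => /andP [/eqP src_t /eqP tgt_t] adj_t.
apply: word_inj; rewrite -src_s -src_u -src_t.
by apply: src_eq_of_adjacent_ends; rewrite // tgt_t tgt_u tgt_s.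
Qed.
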